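(* Let $d\ge1$, $k:=2^d-1$, and let $$X:=\{0\}\cup\Big\{\big(x_1,\dots,x_d,(4k)^{\sum_{i=1}^{d}2^{i-1}x_i}\big): x\in\{0,1\}^d\setminus\{0\}\Big\}\subseteq\mathbb{Z}^{d+1},$$ $P:=\operatorname{conv}(X)$, and $t:=\sum_{a\in X}a$. Then $P\cap\mathbb{Z}^{d+1}=X$, and whenever $t=\sum_{a\in X\setminus\{0\}}\mu_a a$ with all $\mu_a\in\mathbb{Z}_{\ge0}$, we have $\mu_a=1$ for every $a\in X\setminus\{0\}$. In particular every representation of $t$ as a nonnegative integer combination of integer points of $P$ uses all $2^d-1$ nonzero points of $X$ (each exactly once). *)

From HB Require Import structures.
From mathcomp Require Import all_boot all_order all_algebra.
From mathcomp Require Import reals.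
Set Implicit Arguments. Unset Strict Implicit. Unset Printing Implicit Defensive.
Import Order.TTheory GRing.Theory Num.Theory.
Local Open Scope ring_scope.

Definition kk (d : nat) : nat := (2 ^ d - 1)%N.

(* The point (x_1,...,x_d, (4k)^(sum_{i=1}^d 2^(i-1) x_i)) of Z^(d+1),
   0-indexed: coordinates 0..d-1 are x, coordinate d (= ord_max) is the power. *)
Definition pt (d : nat) (x : {ffun 'I_d -> bool}) : 'rV[int]_(d.+1) :=
  \row_(j < d.+1)
    match unlift ord_max j with
    | Some i => (x i : nat)%:Z
    | None => ((4 * kk d) ^ (\sum_(i < d) 2 ^ i * x i))%N%:Z
    end.

Definition Xnz (d : nat) : seq 'rV[int]_(d.+1) :=
  undup [seq pt x | x <- enum {ffun 'I_d -> bool} & x != [ffun=> false]].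

Definition Xs (d : nat) : seq 'rV[int]_(d.+1) := undup (0 :: Xnz d).

Definition tt_ (d : nat) : 'rV[int]_(d.+1) := \sum_(a <- Xs d) a.

Definition in_conv (R : realType) (n : nat) (S : seq 'rV[R]_n) (v : 'rV[R]_n) : Prop :=
  exists lam : 'I_(size S) -> R,
    (forall i, 0 <= lam i) /\ \sum_(i < size S) lam i = 1 /\
    v = \sum_(i < size S) lam i *: nth 0 S i.

Definition toR (R : realType) (n : nat) (y : 'rV[int]_n) : 'rV[R]_n :=
  map_mx (fun z : int => z%:~R) y.

From HB Require Import structures.
From mathcomp Require Import all_boot all_order all_algebra.
From mathcomp Require Import reals zify.
Set Implicit Arguments.
Unset Strict Implicit.
Unset Printing Implicit Defensive.

Import Order.TTheory GRing.Theory Num.Theory.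

(* The first d coordinates of the points of X are pairwise distinct 0/1
   vectors.  If an integer point is a convex combination of points of X, each
   of its first d coordinates is an integral convex combination of 0s and 1s,
   so every point of positive weight agrees with it on these coordinates;
   hence all such points coincide, and the point is one of them.
   In a representation t = sum mu_a a, the i-th coordinate counts the points
   with x_i = 1, which bounds every mu_a by 2^d < 4k.  The last coordinate then
   writes one number in base 4k in two ways, with digits 1 and mu_a at the
   distinct positions sum 2^(i-1) x_i, so mu_a = 1. *)

Section BaseExpansion.

Variable B : nat.
Hypothesis B_gt0 : 0 < B.

Lemma base_digits_inj N (c c' : nat -> nat) :
  (forall n, c n < B) -> (forall n, c' n < B) ->
  \sum_(n < N) c n * B ^ n = \sum_(n < N) c' n * B ^ n ->
  forall n, n < N -> c n = c' n.
Proof.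
elim: N c c' => [|N IH] c c' cB c'B //.
have shift (D : nat -> nat) :
    \sum_(i < N) D (bump 0 i) * B ^ bump 0 i = B * \sum_(i < N) D i.+1 * B ^ i.
  by rewrite big_distrr; apply: eq_bigr => i _; rewrite /bump add1n expnS mulnCA.
rewrite !big_ord_recl /= !expn0 !muln1 !shift => E.
have c0 : c 0 = c' 0.
  have := congr1 (modn^~ B) E.
  by rewrite !(addnC (c _)) !(addnC (c' _)) !(mulnC B) !modnMDl !modn_small.
move: E; rewrite c0 => /addnI/eqP; rewrite eqn_pmul2l // => /eqP E.
case=> [//|n]; apply: (IH (c \o succn) (c' \o succn)) => // m; [exact: cB | exact: c'B].
Qed.

Lemma base_expansion_inj (T : finType) (e : T -> nat) (c c' : T -> nat) :
  injective e -> (forall x, c x < B) -> (forall x, c' x < B) ->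
  \sum_x c x * B ^ e x = \sum_x c' x * B ^ e x -> c =1 c'.
Proof.
move=> e_inj cB c'B.
pose M := \max_x e x.
have e_le x : e x <= M by exact: leq_bigmax.
have fiber_sum (D : T -> nat) n x :
    n == e x -> \sum_(y | e y == n) D y = D x.
  move/eqP->; rewrite (big_pred1 x) // => y /=.
  by apply/eqP/eqP => [/e_inj|->].
have regroup (D : T -> nat) : \sum_x D x * B ^ e x =
    \sum_(n < M.+1) (\sum_(x | e x == n) D x) * B ^ n.
  rewrite (partition_big (fun x => inord (e x) : 'I_M.+1) xpredT) //=.
  apply: eq_bigr => n _; rewrite big_distrl /=.
  apply: eq_big => x; first by rewrite -val_eqE /= inordK // ltnS.
  by move/eqP <-; rewrite inordK // ltnS.
have fiber_lt (D : T -> nat) : (forall x, D x < B) ->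
    forall n, \sum_(x | e x == n) D x < B.
  move=> DB n; case: (pickP (fun x => e x == n)) => [x /eqP ex|none].
    by rewrite (fiber_sum _ _ x) ?ex.
  by rewrite big_pred0.
rewrite !regroup => E x.
have := @base_digits_inj M.+1 _ _ (fiber_lt _ cB) (fiber_lt _ c'B) E (e x) (e_le x).
by rewrite !(fiber_sum _ _ x).
Qed.

End BaseExpansion.

Local Open Scope ring_scope.

Lemma convex_comb_int_coord (R : numDomainType) (I : finType)
    (lam : I -> R) (c : I -> int) (z : int) :
  (forall i, 0 <= lam i) -> \sum_i lam i = 1 -> (forall i, 0 <= c i <= 1) ->
  z%:~R = \sum_i lam i * (c i)%:~R -> forall i, lam i != 0 -> c i = z.
Proof.
move=> lam_ge0 lam1 c01 Ez.
have z01 : 0 <= z <= 1.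
  rewrite -(ler0z R) -(lerz1 R) Ez; apply/andP; split.
    by apply: sumr_ge0 => i _; rewrite mulr_ge0 // ler0z; case/andP: (c01 i).
  rewrite -[leRHS]lam1; apply: ler_sum => i _; rewrite ler_piMr //.
  by rewrite lerz1; case/andP: (c01 i).
(* w i vanishes iff c i = z, is nonnegative since c i, z lie in {0, 1},
   and its lam-average is (z - z) * (1 - 2z) = 0. *)
pose w i : int := (c i - z) * (1 - 2 * z).
have w_ge0 i : 0 <= lam i * (w i)%:~R.
  by rewrite mulr_ge0 // ler0z /w; have := c01 i; nia.
have sum_w : \sum_i lam i * (w i)%:~R = 0.
  under eq_bigr => i _ do rewrite /w intrM mulrA intrB mulrBr.
  by rewrite -mulr_suml sumrB -Ez -mulr_suml lam1 mul1r subrr mul0r.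
move=> i lam_i; have := psumr_eq0P (fun i _ => w_ge0 i) sum_w (i:=i) isT.
move/eqP; rewrite mulf_eq0 (negbTE lam_i) intr_eq0 /w => w0.
by have := c01 i; lia.
Qed.

Lemma convex_comb_const (R : nzRingType) (V : lmodType R) (I : finType)
    (lam : I -> R) (v : I -> V) (p : V) :
  \sum_i lam i = 1 -> (forall i, lam i != 0 -> v i = p) ->
  \sum_i lam i *: v i = p.
Proof.
move=> lam1 vp; rewrite (eq_bigr (fun i => lam i *: p)) => [|i _].
  by rewrite -scaler_suml lam1 scale1r.
by have [->|/vp ->] := eqVneq (lam i) 0; rewrite ?scale0r.
Qed.

Lemma in_conv_mem (R : realType) n (S : seq 'rV[R]_n) v :
  v \in S -> in_conv S v.
Proof.
move=> vS; pose i0 := Ordinal (etrans (index_mem v S) vS).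
exists (fun i => (i == i0)%:R); split; first by move=> i; rewrite ler0n.
have lam1 : \sum_i ((i == i0)%:R : R) = 1.
  by rewrite (bigD1 i0) //= eqxx big1 ?addr0 // => i /negbTE ->.
split=> //; apply/esym/convex_comb_const => // i.
by rewrite pnatr_eq0 eqb0 negbK => /eqP ->; rewrite nth_index.
Qed.

Lemma toR_inj (R : realType) n : injective (@toR R n).
Proof.
move=> a b /matrixP E; apply/matrixP => i j.
by have := E i j; rewrite !mxE => /intr_inj.
Qed.

Lemma ffun_neq0_bit (T : finType) (x : {ffun T -> bool}) :
  x != [ffun=> false] -> exists i, x i.
Proof.
move=> /eqP nz; apply/existsP; apply: contra_notT nz => /existsPn x0.
by apply/ffunP => i; rewrite ffunE; exact/negbTE/x0.
Qed.

Section Points.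

Variable d : nat.
Implicit Types (x : {ffun 'I_d -> bool}) (a : 'rV[int]_d.+1).

Definition binval x : nat := (\sum_(i < d) 2 ^ i * x i)%N.

Definition ptc x (j : 'I_d.+1) : nat :=
  if unlift ord_max j is Some i then x i else ((4 * kk d) ^ binval x)%N.

Lemma ptE x j : pt x 0 j = (ptc x j)%:Z.
Proof. by rewrite /pt mxE /ptc; case: unlift. Qed.

Lemma ptc_lift x i : ptc x (lift ord_max i) = x i.
Proof. by rewrite /ptc liftK. Qed.

Lemma ptc_max x : ptc x ord_max = ((4 * kk d) ^ binval x)%N.
Proof. by rewrite /ptc unlift_none. Qed.

Lemma binval_inj : injective binval.
Proof.
move=> x y E; apply/ffunP => i.
have bit_lt (z : {ffun 'I_d -> bool}) j : (z j < 2)%N by rewrite ltnS leq_b1.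
have := @base_expansion_inj 2 isT _ (@nat_of_ord d) _ _ val_inj (bit_lt x) (bit_lt y).
have digits (z : {ffun 'I_d -> bool}) : (\sum_(j < d) z j * 2 ^ j)%N = binval z.
  by apply: eq_bigr => j _; rewrite mulnC.
rewrite !digits => /(_ E i).
by case: (x i); case: (y i).
Qed.

Lemma pt_inj : injective (@pt d).
Proof.
move=> x y /matrixP E; apply/ffunP => i.
have := E 0 (lift ord_max i); rewrite !ptE !ptc_lift.
by case=> /eqP; case: (x i); case: (y i).
Qed.

Lemma Xnz_map :
  Xnz d = [seq pt x | x <- enum {ffun 'I_d -> bool} & x != [ffun=> false]].
Proof. by rewrite /Xnz undup_id // (map_inj_uniq pt_inj) filter_uniq ?enum_uniq. Qed.

Lemma mem_Xnz a : a \in Xnz d -> exists2 x, x != [ffun=> false] & a = pt x.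
Proof.
by rewrite Xnz_map => /mapP[x]; rewrite mem_filter => /andP[nz _] ->; exists x.
Qed.

Lemma mem_Xs a : a \in Xs d -> a = 0 \/ a \in Xnz d.
Proof. by rewrite mem_undup in_cons => /orP[/eqP|]; auto. Qed.

Lemma Xs_coord_bool a i : a \in Xs d -> 0 <= a 0 (lift ord_max i) <= 1.
Proof.
case/mem_Xs => [->|/mem_Xnz[x _ ->]]; first by rewrite mxE.
by rewrite ptE ptc_lift; case: (x i).
Qed.

Lemma Xs_inj a b : a \in Xs d -> b \in Xs d ->
  (forall i, a 0 (lift ord_max i) = b 0 (lift ord_max i)) -> a = b.
Proof.
case/mem_Xs => [->|/mem_Xnz[x x_nz ->]]; case/mem_Xs => [->|/mem_Xnz[y y_nz ->]] //.
- by have [i yi] := ffun_neq0_bit y_nz => /(_ i)/eqP; rewrite ptE ptc_lift yi mxE.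
- by have [i xi] := ffun_neq0_bit x_nz => /(_ i)/eqP; rewrite ptE ptc_lift xi mxE.
move=> E; congr pt; apply/ffunP => i.
by have := E i; rewrite !ptE !ptc_lift => -[]; case: (x i); case: (y i).
Qed.

Lemma in_conv_Xs (R : realType) y :
  in_conv (map (@toR R _) (Xs d)) (toR R y) <-> y \in Xs d.
Proof.
split=> [[lam [lam_ge0 [lam1 lam_y]]] | yX]; last by apply/in_conv_mem/map_f.
have sz (i : 'I_(size (map (@toR R _) (Xs d)))) : (i < size (Xs d))%N.
  by rewrite -(size_map (@toR R _)).
pose a (i : 'I_(size (map (@toR R _) (Xs d)))) := nth 0 (Xs d) i.
have aX i : a i \in Xs d by exact/mem_nth/sz.
have coord j : (y 0 j)%:~R = \sum_i lam i * (a i 0 j)%:~R.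
  have /matrixP/(_ 0 j) := lam_y; rewrite !mxE summxE => ->.
  by apply: eq_bigr => i _; rewrite !mxE (nth_map 0) ?sz // mxE.
have prefix i : lam i != 0 -> forall t, a i 0 (lift ord_max t) = y 0 (lift ord_max t).
  move=> lam_i t; apply: (convex_comb_int_coord lam_ge0 lam1 _ (coord _)) lam_i.
  by move=> i'; apply: Xs_coord_bool.
have [m /andP[_ lam_m]] : exists m, true && (0 < lam m).
  apply: (psumr_neq0P (fun i _ => lam_ge0 i)).
  by rewrite lam1; exact/eqP/oner_neq0.
suff -> : y = a m by [].
apply: (@toR_inj R); rewrite lam_y; apply: convex_comb_const => // i lam_i.
rewrite (nth_map 0) ?sz //; congr toR; apply: (Xs_inj (aX i) (aX m)) => t.
by rewrite prefix // prefix // lt0r_neq0.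
Qed.

Lemma big_Xnz (V : nmodType) (F : 'rV[int]_d.+1 -> V) :
  \sum_(a <- Xnz d) F a = \sum_(x | x != [ffun=> false]) F (pt x).
Proof. by rewrite Xnz_map big_map big_filter big_enum_cond. Qed.

Hypothesis d_gt0 : (0 < d)%N.

Lemma exp2_lt_base : (2 ^ d < 4 * kk d)%N.
Proof.
have : (2 ^ 1 <= 2 ^ d)%N by rewrite leq_exp2l.
by rewrite /kk; lia.
Qed.

Lemma zero_notin_Xnz : 0 \notin Xnz d.
Proof.
apply/negP => /mem_Xnz[x _ /matrixP/(_ 0 ord_max)].
rewrite ptE ptc_max mxE => -[] /eqP; rewrite eq_sym expn_eq0.
by have := exp2_lt_base; lia.
Qed.

Lemma tt_Xnz : tt_ d = \sum_(a <- Xnz d) a.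
Proof.
rewrite /tt_ /Xs /= (negbTE zero_notin_Xnz).
by rewrite undup_id ?undup_uniq // big_cons add0r.
Qed.

Section Multiplicities.

Variable mu : 'rV[int]_d.+1 -> nat.
Hypothesis t_mu : tt_ d = \sum_(a <- Xnz d) a *+ mu a.

Lemma mult_coord j :
  (\sum_(x | x != [ffun=> false]) ptc x j =
   \sum_(x | x != [ffun=> false]) ptc x j * mu (pt x))%N.
Proof.
have Posz_sum (f : {ffun 'I_d -> bool} -> nat) :
    \sum_(x | x != [ffun=> false]) (f x)%:Z = (\sum_(x | x != [ffun=> false]) f x)%N.
  by rewrite (big_morph Posz PoszD (erefl 0%:Z)).
have /matrixP/(_ 0 j) := t_mu; rewrite tt_Xnz !big_Xnz !summxE => E.
apply/eqP; rewrite -eqz_nat -!Posz_sum; apply/eqP.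
under eq_bigr do rewrite -ptE.
under [RHS]eq_bigr do rewrite PoszM -[(mu _)%:Z]natz mulr_natr -ptE -mulmxnE.
exact: E.
Qed.

Lemma mult_le_card x : x != [ffun=> false] -> (mu (pt x) <= 2 ^ d)%N.
Proof.
move=> x_nz; have [i xi] := ffun_neq0_bit x_nz.
have := mult_coord (lift ord_max i).
under eq_bigr do rewrite ptc_lift.
under [in RHS]eq_bigr do rewrite ptc_lift.
move=> E; apply: (@leq_trans (\sum_(y | y != [ffun=> false]) y i * mu (pt y))%N).
  by rewrite (bigD1 x) //= xi mul1n leq_addr.
rewrite -E big_mkcond; apply: (@leq_trans (\sum_(y : {ffun 'I_d -> bool}) 1)%N).
  by apply: leq_sum => y _; case: ifP; rewrite ?leq_b1.
by rewrite sum1_card card_ffun card_bool card_ord.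
Qed.

Lemma mult_eq1 x : x != [ffun=> false] -> mu (pt x) = 1%N.
Proof.
pose B := (4 * kk d)%N.
have B_gt0 : (0 < B)%N by have := exp2_lt_base; rewrite /B; lia.
pose c (y : {ffun 'I_d -> bool}) := if y != [ffun=> false] then 1%N else 0%N.
pose c' (y : {ffun 'I_d -> bool}) := if y != [ffun=> false] then mu (pt y) else 0%N.
have E : (\sum_y c y * B ^ binval y = \sum_y c' y * B ^ binval y)%N.
  transitivity (\sum_(y | y != [ffun=> false]) ptc y ord_max)%N.
    rewrite [RHS]big_mkcond; apply: eq_bigr => y _.
    by rewrite /c ptc_max; case: ifP; rewrite ?mul1n.
  rewrite mult_coord [LHS]big_mkcond; apply: eq_bigr => y _.
  by rewrite /c' ptc_max; case: ifP; rewrite // mulnC.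
have c_lt y : (c y < B)%N.
  by rewrite /c; case: ifP; have := exp2_lt_base; have := expn_gt0 2 d; lia.
have c'_lt y : (c' y < B)%N.
  rewrite /c'; case: ifP => [y_nz|_]; last exact: B_gt0.
  exact: leq_ltn_trans (mult_le_card y_nz) exp2_lt_base.
move=> x_nz; have /(_ x) := base_expansion_inj B_gt0 binval_inj c_lt c'_lt E.
by rewrite /c /c' x_nz.
Qed.

End Multiplicities.

End Points.

Theorem mainTheorem3 (R : realType) (d : nat) (hd : (1 <= d)%N) :
  (forall y : 'rV[int]_(d.+1),
      in_conv (map (@toR R _) (Xs d)) (toR R y) <-> y \in Xs d) /\
  (forall mu : 'rV[int]_(d.+1) -> nat,
      tt_ d = \sum_(a <- Xnz d) a *+ mu a ->
      forall a, a \in Xnz d -> mu a = 1%N).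
Proof.
split=> [y | mu t_mu a /mem_Xnz[x x_nz ->]]; first exact: in_conv_Xs.
exact: (mult_eq1 hd t_mu x_nz).
Qed.
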